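(* Let $n, m, k, l, s, t$ be positive integers with $\min\{m,n\}\geq (t+1)(k-t+1)$, $k\geq l\geq t+1\geq 4$ and $t+3\leq s \leq k+1$. Then \[(t+1)(k-s+2)(m-l+t-s+2)-(s-1-t)\big((m-l+t-s+1)(n-k-1)-(k-s+2)(l-t)\big)<0.\] *)

From Stdlib Require Import ZArith Lia.

From Stdlib Require Import ZArith Lia.
Open Scope Z_scope.

(* Put K := k - t, a := s - 1 - t, B := k - s + 2 (so a + B = K + 1),
   M := m - l + t - s + 1, N := n - k - 1 and L := l - t.  The hypothesis on
   min{m, n} gives N >= t K and M > K; with B < K and L <= K the positive
   terms are then at most (t + 1) K M + a K K < (t + 1 + a) K M, while the
   negative term a M N is at least a t K M, and t + 1 + a <= a t because
   a >= 2 and t >= 3. *)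

Lemma mul_succ_le_mul (B K M : Z) :
  0 <= B <= K - 1 -> K <= M -> B * (M + 1) <= K * M.
Proof. intros; nia. Qed.

Lemma succ_add_le_mul (a t : Z) : 2 <= a -> 3 <= t -> t + 1 + a <= a * t.
Proof. intros; nia. Qed.

Lemma reduced_form_neg (t K a B M N L : Z) :
  3 <= t -> 2 <= a -> 1 <= B <= K - 1 -> K < M -> t * K <= N -> 1 <= L <= K ->
  (t + 1) * B * (M + 1) - a * (M * N - B * L) < 0.
Proof.
  intros ht ha hB hKM hN hL.
  assert (first_term : (t + 1) * (B * (M + 1)) <= (t + 1) * (K * M)).
  { apply Z.mul_le_mono_nonneg_l; [lia | apply mul_succ_le_mul; lia]. }
  assert (second_term : a * (B * L) < a * (K * M)).
  { apply Z.mul_lt_mono_pos_l; nia. }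
  assert (coefficients : (t + 1 + a) * (K * M) <= (a * t) * (K * M)).
  { apply Z.mul_le_mono_nonneg_r; [nia | apply succ_add_le_mul; lia]. }
  assert (negative_term : a * (M * (t * K)) <= a * (M * N)).
  { apply Z.mul_le_mono_nonneg_l; [lia | apply Z.mul_le_mono_nonneg_l; lia]. }
  nia.
Qed.

Theorem lemma3p2 (n m k l s t : Z)
  (hn : 0 < n) (hm : 0 < m) (hk : 0 < k) (hl : 0 < l) (hs : 0 < s) (ht : 0 < t)
  (hmin : Z.min m n >= (t + 1) * (k - t + 1))
  (hkl : k >= l) (hlt : l >= t + 1) (ht4 : t + 1 >= 4)
  (hs1 : t + 3 <= s) (hs2 : s <= k + 1) :
  (t + 1) * (k - s + 2) * (m - l + t - s + 2)
  - (s - 1 - t) * ((m - l + t - s + 1) * (n - k - 1) - (k - s + 2) * (l - t)) < 0.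
Proof.
  assert (hm' : (t + 1) * (k - t + 1) <= m) by lia.
  assert (hn' : (t + 1) * (k - t + 1) <= n) by lia.
  replace (m - l + t - s + 2) with ((m - l + t - s + 1) + 1) by ring.
  apply reduced_form_neg with (K := k - t); nia.
Qed.
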